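(* Let $\mathcal X$ and $\mathcal Y$ be countable spaces, each endowed with the discrete metric. If $\{\mu_n\}_{n\in\mathbb N}\subset\wp(\mathcal X\times\mathcal Y)$ converges to $\mu$ in the weak-* topology, then $\mu_n\to\mu$ in $\wp_I(\mathcal X\times\mathcal Y)$.
   Context: For a Polish space $\mathcal S$, $\wp(\mathcal S)$ denotes the Borel probability measures and $\wp_w(\mathcal S)$ this set with the weak-* topology (weakest topology making $\mu\mapsto\int g\,d\mu$ continuous for all bounded continuous $g$). For $\mu\in\wp(\mathcal X\times\mathcal Y)$, $\mu^{\mathcal X}$ is the marginal and $\mu(\cdot\mid x)$ a regular conditional distribution on $\mathcal Y$ given $x$. Let $\psi(\mu)\in\wp(\mathcal X\times\wp_w(\mathcal Y))$ be $\psi(\mu)(dx,d\zeta)=\delta_{\mu(\cdot\mid x)}(d\zeta)\mu^{\mathcal X}(dx)$. The topology of information on $\wp(\mathcal X\times\mathcal Y)$ is the coarsest topology making $\psi$ continuous into $\wp_w(\mathcal X\times\wp_w(\mathcal Y))$; $\wp_I(\mathcal X\times\mathcal Y)$ denotes $\wp(\mathcal X\times\mathcal Y)$ with it. *)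

From HB Require Import structures.
From mathcomp Require Import all_boot all_order all_algebra.
From mathcomp Require Import all_classical all_reals all_analysis.
Set Implicit Arguments.
Unset Strict Implicit.
Unset Printing Implicit Defensive.
Import Order.TTheory GRing.Theory Num.Theory.
Local Open Scope classical_set_scope.
Local Open Scope ring_scope.

Section InfoTopology.
Context {R : realType}.

Definition bounded_fun {T : Type} (g : T -> R) : Prop :=
  exists M : R, forall t, `|g t| <= M.

(* Weak-* convergence of a sequence of Borel probability measures on a space
   T carrying the discrete topology: every bounded function is continuous, so
   the test functions are all bounded real functions on T. *)
Definition weak_cvg_discrete {d} {T : measurableType d}
    (mu_ : nat -> probability T R) (mu : probability T R) : Prop :=
  forall g : T -> R, bounded_fun g ->
    ((fun n => \int[mu_ n]_t (g t)%:E) @ \oo --> \int[mu]_t (g t)%:E)%E.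

(* Continuity of G : X x P_w(Y) -> R, where X is discrete and P_w(Y) carries
   the weak-* topology, i.e. the initial topology of the maps
   nu |-> \int h dnu, h bounded (= bounded continuous on a discrete Y).
   Basic neighbourhoods of (x0, nu0) are {x0} x {nu | |\int h_i dnu -
   \int h_i dnu0| < delta, i < k} for finitely many bounded h_i. *)
Definition weak_continuous {dX dY} {X : measurableType dX}
    {Y : measurableType dY} (G : X -> probability Y R -> R) : Prop :=
  forall (x0 : X) (nu0 : probability Y R) (e : R), 0 < e ->
    exists (k : nat) (h : 'I_k -> Y -> R) (delta : R),
      0 < delta /\ (forall i, bounded_fun (h i)) /\
      forall nu : probability Y R,
        (forall i, (`| \int[nu]_y (h i y)%:E - \int[nu0]_y (h i y)%:E | <
                    delta%:E)%E) ->
        `| G x0 nu - G x0 nu0 | < e.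

Context {dX dY : measure_display} {X : measurableType dX}
  {Y : measurableType dY}.

Definition marginalX (mu : probability (X * Y)%type R) : measure X R :=
  measure_function_pushforward__canonical__measure_function_Measure
    mu (@measurable_fst _ _ X Y).

Lemma measurable_slab (hX : forall A : set X, measurable A) (x : X) :
  measurable ([set x] `*` [set: Y]).
Proof. by apply: measurableX => //; exact: hX. Qed.

Definition slice (hX : forall A : set X, measurable A)
    (mu : probability (X * Y)%type R) (x : X) : measure Y R :=
  measure_function_pushforward__canonical__measure_function_Measure
    (mrestr mu (measurable_slab hX x)) (@measurable_snd _ _ X Y).

(* A regular conditional distribution mu(. | x) of mu given x:
   mu({x} x B) / mu^X({x}) when mu^X({x}) > 0, and (arbitrarily) the Dirac
   mass at a fixed point of Y on the mu^X-null set where mu^X({x}) = 0. *)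
Definition cond (hX : forall A : set X, measurable A)
    (mu : probability (X * Y)%type R) (x : X) : probability Y R :=
  mnormalize (slice hX mu x) (dirac point).

(* \int G d(psi(mu)), where psi(mu)(dx, dzeta) = delta_{mu(.|x)}(dzeta)
   mu^X(dx): the integral of (x, zeta) |-> G x zeta against psi(mu) is
   \int G x (mu(.|x)) mu^X(dx). *)
Definition psi_integral (hX : forall A : set X, measurable A)
    (mu : probability (X * Y)%type R) (G : X -> probability Y R -> R) : \bar R :=
  (\int[marginalX mu]_x (G x (cond hX mu x))%:E)%E.

(* Convergence in the topology of information: psi(mu_n) -> psi(mu) in
   wp_w(X x wp_w(Y)), i.e. integrals of every bounded continuous
   G : X x wp_w(Y) -> R converge. *)
Definition info_cvg (hX : forall A : set X, measurable A)
    (mu_ : nat -> probability (X * Y)%type R)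
    (mu : probability (X * Y)%type R) : Prop :=
  forall G : X -> probability Y R -> R,
    (exists M : R, forall x nu, `|G x nu| <= M) -> weak_continuous G ->
    (fun n => psi_integral hX (mu_ n) G) @ \oo --> psi_integral hX mu G.

End InfoTopology.

From Pilot Require Import Defs.
From HB Require Import structures.
From mathcomp Require Import all_boot all_order all_algebra.
From mathcomp Require Import all_classical all_reals all_analysis.
From mathcomp Require Import measurable_realfun lra.
Import Order.TTheory GRing.Theory Num.Theory numFieldNormedType.Exports.
Local Open Scope classical_set_scope.
Local Open Scope ring_scope.

(* On countable discrete spaces every set is measurable, so weak-* convergence
   means convergence of [\int g dmu_n] for every bounded [g], and integrating
   [G] against [psi(mu)] is integrating [F z := G z.1 (mu(.|z.1))] against
   [mu].  Where [mu({x} x Y) > 0], the conditional [mu_n(.|x)] is eventually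
   the ratio [mu_n({x} x .) / mu_n({x} x Y)], which converges weakly to
   [mu(.|x)]; hence [F_n z := G z.1 (mu_n(.|z.1)) -> F z] by continuity of
   [G], except on the union of the null slabs, a null set because [X] is
   countable.  The tail deviation [sup_(n >= N) |F_n - F|] dominates
   [|F_n - F|] for [n >= N] but no longer depends on [n], so weak-*
   convergence applies to it, while its [mu]-integral tends to 0 by
   dominated convergence; together these control
   [\int F_n dmu_n - \int F dmu]. *)

Section integral_complements.
Context {R : realType} {d : measure_display} {T : measurableType d}.
Local Open Scope ereal_scope.

Lemma EFin_Rintegral (m : {measure set T -> \bar R}) (D : set T) (f : T -> R) :
  measurable D -> m.-integrable D (EFin \o f) ->
  (\int[m]_(x in D) f x)%R%:E = \int[m]_(x in D) (f x)%:E.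
Proof. by move=> mD intf; rewrite fineK //; exact: integrable_fin_num. Qed.

Lemma integral_mrestr (m : {measure set T -> \bar R}) (D : set T)
    (mD : measurable D) (f : T -> \bar R) :
  measurable_fun setT f ->
  \int[mrestr m mD]_x f x = \int[m]_(x in D) f x.
Proof.
move=> mf; have mfD : measurable_fun setT (f \_ D).
  by apply/(measurable_restrict _ mD measurableT); exact: measurable_funS mf.
transitivity (\int[mrestr m mD]_x (f \_ D) x).
  apply: ae_eq_integral => //; exists (~` D); split.
  - exact: measurableC.
  - by rewrite /= /mrestr setICl measure0.
  - by move=> x /= fDx Dx; apply: fDx => _; rewrite /patch mem_set.
rewrite -integral_mkcond; apply: eq_measure_integral => A mA AD.
by rewrite /= /mrestr setIidl.
Qed.

Lemma integral_mscale (k : {nonneg R}) (m : {measure set T -> \bar R})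
    (f : T -> \bar R) :
  m.-integrable setT f ->
  \int[mscale k m]_x f x = k%:num%:E * \int[m]_x f x.
Proof.
move=> intf; have mf := measurable_int _ intf.
rewrite [LHS]integralE [in RHS]integralE.
rewrite !ge0_integral_mscale //;
  do ?[exact: measurable_funepos | exact: measurable_funeneg].
rewrite [RHS]muleBr //; apply: fin_num_adde_defl; rewrite fin_numN.
exact: integrable_neg_fin_num.
Qed.

End integral_complements.

Section discrete_integral.
Context {R : realType} {d : measure_display} {T : measurableType d}.
Hypothesis hT : forall A : set T, measurable A.

Lemma measurable_fun_discrete {d'} {T' : measurableType d'} (D : set T)
    (f : T -> T') :
  measurable_fun D f.
Proof. by move=> _ B _; exact: hT. Qed.

Lemma bounded_integrable (m : {measure set T -> \bar R}) (D : set T)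
    (f : T -> R) :
  (m D < +oo)%E -> Defs.bounded_fun f -> m.-integrable D (EFin \o f).
Proof.
move=> mfin [M hM]; apply/integrableP.
split; first exact: measurable_fun_discrete.
apply: (@le_lt_trans _ _ (\int[m]_(x in D) (cst M%:E) x)%E).
  apply: ge0_le_integral => //; do ?exact: measurable_fun_discrete.
  by move=> x _ /=; rewrite lee_fin.
have mfn : m D \is a fin_num by rewrite ge0_fin_numE.
by rewrite integral_cst //= -(fineK mfn) -EFinM ltry.
Qed.

Lemma bounded_integrable_prob (P : probability T R) (D : set T) (f : T -> R) :
  Defs.bounded_fun f -> P.-integrable D (EFin \o f).
Proof.
apply: bounded_integrable.
by rewrite (le_lt_trans (probability_le1 _ _)) ?ltry.
Qed.

Lemma weak_cvg_discrete_Rintegral {mu_ : nat -> probability T R}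
    {mu : probability T R} (D : set T) {g : T -> R} :
  weak_cvg_discrete mu_ mu -> Defs.bounded_fun g ->
  \int[mu_ n]_(t in D) g t @[n --> \oo] --> \int[mu]_(t in D) g t.
Proof.
move=> mu_cvg [M gM]; have gD_bounded : Defs.bounded_fun (g \_ D).
  exists `|M| => t; rewrite /patch; case: ifP => _.
    exact: le_trans (gM t) (ler_norm M).
  by rewrite normr0.
under eq_fun do rewrite Rintegral_mkcond.
rewrite [\int[mu]_(t in D) g t]Rintegral_mkcond.
have := mu_cvg _ gD_bounded; rewrite -EFin_Rintegral //;
  last exact: bounded_integrable_prob.
by move=> /fine_cvg.
Qed.

End discrete_integral.

Section weak_cvg_Rintegral.
Context {R : realType} {d : measure_display} {T : measurableType d}.
Hypothesis hT : forall A : set T, measurable A.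
Variables (mu_ : nat -> probability T R) (mu : probability T R).
Hypothesis mu_cvg : weak_cvg_discrete mu_ mu.
Variables (F_ : nat -> T -> R) (F : T -> R) (M : R).
Hypotheses (F_bounded : forall n t, `|F_ n t| <= M)
  (F_lim_bounded : forall t, `|F t| <= M).
Hypothesis F_cvg : {ae mu, forall t, F_ n t @[n --> \oo] --> F t}.

Let deviation_bounded n t : `|F_ n t - F t| <= M + M.
Proof. by rewrite (le_trans (ler_normB _ _)) // lerD. Qed.

Definition tail_deviation N t :=
  sup [set `|F_ n t - F t| | n in [set n | (N <= n)%N]].

Lemma tail_deviation_ub N n t :
  (N <= n)%N -> `|F_ n t - F t| <= tail_deviation N t.
Proof.
move=> Nn; apply: ub_le_sup; last by exists n.
by exists (M + M) => _ [m _ <-].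
Qed.

Lemma tail_deviation_le N t a :
  (forall n, (N <= n)%N -> `|F_ n t - F t| <= a) -> tail_deviation N t <= a.
Proof.
move=> ha; apply: ge_sup; first by exists `|F_ N t - F t|; exists N => /=.
by move=> _ [m Nm <-]; exact: ha.
Qed.

Lemma tail_deviation_ge0 N t : 0 <= tail_deviation N t.
Proof. exact: le_trans (normr_ge0 _) (tail_deviation_ub _ _ t (leqnn N)). Qed.

Lemma tail_deviation_bounded N : Defs.bounded_fun (tail_deviation N).
Proof.
exists (M + M) => t; rewrite ger0_norm ?tail_deviation_ge0 //.
exact: tail_deviation_le.
Qed.

Lemma tail_deviation_cvg0 t : F_ n t @[n --> \oo] --> F t ->
  tail_deviation N t @[N --> \oo] --> 0.
Proof.
move=> /cvgrPdist_lt cvgF; apply/cvgrPdist_lt => e e0.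
have [K _ HK] := cvgF _ (divr_gt0 e0 (ltr0n _ 2)).
exists K => // N /= KN.
rewrite sub0r normrN ger0_norm ?tail_deviation_ge0 //.
apply: (@le_lt_trans _ _ (e / 2)).
  2: by rewrite ltr_pdivrMr // ltr_pMr // ltr1n.
apply: tail_deviation_le => n Nn; rewrite distrC ltW //.
by apply: HK; rewrite /= (leq_trans KN Nn).
Qed.

Lemma Rintegral_tail_deviation_cvg0 :
  \int[mu]_t tail_deviation N t @[N --> \oo] --> 0.
Proof.
have mf := measurable_fun_discrete hT.
have dev_cvg : {ae mu, forall t, setT t ->
    (tail_deviation N t)%:E @[N --> \oo] --> (cst 0%E t)}.
  apply: filterS F_cvg => t /tail_deviation_cvg0 cvg0 _.
  by apply: cvg_EFin => //; exact: nearW.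
have dev_le : {ae mu, forall t N, setT t ->
    (`|(tail_deviation N t)%:E| <= (M + M)%:E)%E}.
  apply: aeW => t N _.
  by rewrite abse_EFin lee_fin ger0_norm ?tail_deviation_ge0 ?tail_deviation_le.
have cst_integrable : mu.-integrable setT (EFin \o cst (M + M)).
  by apply: bounded_integrable_prob => //; exists `|M + M|.
have [_ _] := dominated_convergence measurableT (fun N => mf _ _ _ _)
  (mf _ _ _ _) dev_cvg cst_integrable dev_le.
by rewrite integral0 => /fine_cvg.
Qed.

Let F_bounded_fun n : Defs.bounded_fun (F_ n). Proof. by exists M. Qed.
Let F_lim_bounded_fun : Defs.bounded_fun F. Proof. by exists M. Qed.

Lemma dist_Rintegral_le {N n} : (N <= n)%N ->
  `|\int[mu_ n]_t F_ n t - \int[mu]_t F t| <=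
  \int[mu_ n]_t tail_deviation N t + `|\int[mu_ n]_t F t - \int[mu]_t F t|.
Proof.
move=> Nn; have intF := bounded_integrable_prob hT (mu_ n) setT.
have dev_bounded : Defs.bounded_fun (fun t => F_ n t - F t).
  by exists (M + M) => t; exact: deviation_bounded.
have absdev_bounded : Defs.bounded_fun (fun t => `|F_ n t - F t|).
  by exists (M + M) => t; rewrite normr_id.
rewrite -[X in `|X - _|](subrK (\int[mu_ n]_t F t)) -addrA.
apply: (le_trans (ler_normD _ _)); rewrite lerD2r -RintegralB //;
  [|exact: intF (F_bounded_fun n)|exact: intF F_lim_bounded_fun].
apply: le_trans (le_normr_Rintegral _ (intF _ dev_bounded)) _ => //.
apply: le_Rintegral => //;
  [exact: intF absdev_bounded|exact: intF (tail_deviation_bounded N)|].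
by move=> t _; exact: tail_deviation_ub.
Qed.

Theorem weak_cvg_Rintegral_of_ae_cvg :
  \int[mu_ n]_t F_ n t @[n --> \oo] --> \int[mu]_t F t.
Proof.
apply/cvgrPdist_lt => e e0; have e3 : 0 < e / 3 by rewrite divr_gt0.
have /cvgrPdist_lt/(_ _ e3)[N _ dev_small] := Rintegral_tail_deviation_cvg0.
have dev_N : \int[mu]_t tail_deviation N t < e / 3.
  have := dev_small N (leqnn N); rewrite sub0r normrN ger0_norm //.
  by apply: Rintegral_ge0 => t _; exact: tail_deviation_ge0.
have /cvgrPdist_lt/(_ _ e3) dev_int_cvg :=
  weak_cvg_discrete_Rintegral hT setT mu_cvg (tail_deviation_bounded N).
have /cvgrPdist_lt/(_ _ e3) F_int_cvg :=
  weak_cvg_discrete_Rintegral hT setT mu_cvg F_lim_bounded_fun.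
near=> n.
have Nn : (N <= n)%N by near: n; exists N.
have dev_n : `|\int[mu]_t tail_deviation N t - \int[mu_ n]_t tail_deviation N t|
  < e / 3 by near: n.
have F_n : `|\int[mu]_t F t - \int[mu_ n]_t F t| < e / 3 by near: n.
rewrite distrC; apply: le_lt_trans (dist_Rintegral_le Nn) _.
move: dev_n F_n; rewrite ltr_norml distrC => /andP[dev_lo _] F_n.
lra.
Unshelve. all: by end_near.
Qed.

End weak_cvg_Rintegral.

Section conditional_distribution.
Context {R : realType} {dX dY : measure_display} {X : measurableType dX}
  {Y : measurableType dY}.
Hypotheses (hX : forall A : set X, measurable A)
  (hY : forall B : set Y, measurable B)
  (cX : countable [set: X]) (cY : countable [set: Y]).

Lemma measurable_discreteXY (A : set (X * Y)%type) : measurable A.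
Proof.
apply: countable_measurable.
- move=> [x y]; have -> : [set (x, y)] = [set x] `*` [set y].
    by apply/seteqP; split=> [[a b] [-> ->]|[a b] [/= -> ->]].
  by apply: measurableX; [exact: hX|exact: hY].
- apply: (sub_countable (subset_card_le (subsetT A))).
  by rewrite -setXTT; exact: countableX cX cY.
Qed.

Definition slab (x : X) : set (X * Y)%type := [set x] `*` [set: Y].

Lemma slab_lty (nu : probability (X * Y)%type R) (x : X) :
  (nu (slab x) < +oo)%E.
Proof.
rewrite (le_lt_trans (probability_le1 _ _)) ?ltry //.
exact: measurable_discreteXY.
Qed.

Lemma fine_slab_gt0 {nu : probability (X * Y)%type R} {x : X} :
  nu (slab x) != 0%E -> 0 < fine (nu (slab x)).
Proof. by move=> nu0; rewrite fine_gt0 // lt0e nu0 measure_ge0 slab_lty. Qed.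

Lemma Rintegral_cond (nu : probability (X * Y)%type R) (x : X) (h : Y -> R) :
  Defs.bounded_fun h -> nu (slab x) != 0%E ->
  \int[cond hX nu x]_y h y =
  (\int[nu]_(z in slab x) h z.2) / fine (nu (slab x)).
Proof.
move=> h_bounded nu0; have mXY := measurable_discreteXY.
have k0 : 0 <= (fine (nu (slab x)))^-1.
  by rewrite invr_ge0 ltW ?(fine_slab_gt0 nu0).
pose k : {nonneg R} := NngNum k0.
have cond_mscale A : measurable A -> A `<=` setT ->
    cond hX nu x A = mscale k (slice hX nu x) A.
  move=> _ _; rewrite /cond /= /mnormalize /= /pushforward /mrestr.
  rewrite preimage_setT setTI -/(slab x) (negbTE nu0) lt_eqF ?slab_lty //=.
  by rewrite /mscale /= muleC.
have restr_lty : (mrestr nu (measurable_slab hX x) setT < +oo)%E.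
  by rewrite /= /mrestr setTI slab_lty.
have hsnd_bounded : Defs.bounded_fun (fun z : X * Y => h z.2).
  by case: h_bounded => M hM; exists M.
apply: EFin_inj; rewrite EFinM !EFin_Rintegral //;
  [|exact: bounded_integrable_prob|exact: bounded_integrable_prob].
rewrite (eq_measure_integral _ cond_mscale) integral_mscale; last first.
  apply: (bounded_integrable hY) h_bounded.
  by rewrite /= /pushforward preimage_setT.
rewrite integral_pushforward //= ?preimage_setT; last first.
  by have := bounded_integrable mXY _ _ _ restr_lty hsnd_bounded.
rewrite integral_mrestr; first by rewrite muleC.
exact: (measurable_fun_discrete mXY).
Qed.

Lemma Rintegral_cond_cvg {mu_ : nat -> probability (X * Y)%type R}
    {mu : probability (X * Y)%type R} {x : X} {h : Y -> R} :
  weak_cvg_discrete mu_ mu -> Defs.bounded_fun h -> mu (slab x) != 0%E ->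
  \int[cond hX (mu_ n) x]_y h y @[n --> \oo] --> \int[cond hX mu x]_y h y.
Proof.
move=> mu_cvg h_bounded mu0; have mXY := measurable_discreteXY.
have hsnd_bounded : Defs.bounded_fun (fun z : X * Y => h z.2).
  by case: h_bounded => M hM; exists M.
have mass_cvg : fine (mu_ n (slab x)) @[n --> \oo] --> fine (mu (slab x)).
  have one_bounded : Defs.bounded_fun (fun _ : X * Y => 1 : R).
    by exists 1 => _; rewrite normr1.
  have := weak_cvg_discrete_Rintegral mXY (slab x) mu_cvg one_bounded.
  rewrite Rintegral_cst // mul1r.
  by under eq_fun do rewrite Rintegral_cst // mul1r.
have mass_pos := fine_slab_gt0 mu0.
have mu_n0 : \forall n \near \oo, mu_ n (slab x) != 0%E.
  apply: filterS (cvgr_gt _ mass_cvg _ mass_pos) => n mass_n_pos.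
  by apply: contraTneq mass_n_pos => ->; rewrite ltxx.
rewrite Rintegral_cond //.
apply: (@cvg_trans _ ((fun n => (\int[mu_ n]_(z in slab x) h z.2) /
    fine (mu_ n (slab x))) @ \oo)).
  apply: near_eq_cvg; apply: filterS mu_n0 => n mu_n0.
  by rewrite Rintegral_cond.
apply: cvgM.
  exact: (weak_cvg_discrete_Rintegral mXY (slab x) mu_cvg hsnd_bounded).
by apply: cvgV => //; exact: lt0r_neq0.
Qed.

Lemma negligible_null_slabs (nu : probability (X * Y)%type R) :
  nu.-negligible [set z | nu (slab z.1) = 0%E].
Proof.
have /pcard_geP[e] := cX.
have null_cover : [set z | nu (slab z.1) = 0%E] `<=`
    \bigcup_k (slab (e k) `&` [set z | nu (slab z.1) = 0%E]).
  move=> z null_z; have [k _ ek] := @surj _ _ _ _ e z.1 I.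
  by exists k => //; split => //; rewrite /slab /= ek.
apply: negligibleS null_cover _; apply: negligible_bigcup => k.
apply/negligibleP; first exact: measurable_discreteXY.
have [nu0|nu_neq0] := eqVneq (nu (slab (e k))) 0%E.
  apply/eqP; rewrite -measure_le0 -nu0; apply: le_measure; rewrite ?inE;
    [exact: measurable_discreteXY|exact: measurable_discreteXY|exact: subIsetl].
suff -> : slab (e k) `&` [set z | nu (slab z.1) = 0%E] = set0.
  exact: measure0.
by apply/seteqP; split => // z [/= [-> _]] /eqP; rewrite (negbTE nu_neq0).
Qed.

Lemma cond_weak_continuous_cvg (mu_ : nat -> probability (X * Y)%type R)
    (mu : probability (X * Y)%type R) (G : X -> probability Y R -> R) (x : X) :
  weak_cvg_discrete mu_ mu -> weak_continuous G -> mu (slab x) != 0%E ->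
  G x (cond hX (mu_ n) x) @[n --> \oo] --> G x (cond hX mu x).
Proof.
move=> mu_cvg G_cont mu0; apply/cvgrPdist_lt => e e0.
have [k [h [delta [delta0 [h_bounded G_near]]]]] :=
  G_cont x (cond hX mu x) e e0.
have : \forall n \near \oo, forall i, (`|\int[cond hX (mu_ n) x]_y (h i y)%:E -
    \int[cond hX mu x]_y (h i y)%:E| < delta%:E)%E.
  apply: filter_forall => i.
  have hi_integrable (P : probability Y R) : P.-integrable setT (EFin \o h i).
    exact: bounded_integrable_prob hY P setT _ (h_bounded i).
  have /cvgrPdist_lt/(_ _ delta0) :=
    Rintegral_cond_cvg mu_cvg (h_bounded i) mu0.
  apply: filterS => n; rewrite -!EFin_Rintegral ?hi_integrable //.
  by rewrite -EFinB abse_EFin lte_fin distrC.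
by apply: filterS => n /G_near; rewrite distrC.
Qed.

Lemma psi_integralE (nu : probability (X * Y)%type R)
    (G : X -> probability Y R -> R) (M : R) :
  (forall x zeta, `|G x zeta| <= M) ->
  psi_integral hX nu G = (\int[nu]_z G z.1 (cond hX nu z.1))%:E.
Proof.
move=> G_bounded.
have Gcond_bounded : Defs.bounded_fun (fun z : X * Y => G z.1 (cond hX nu z.1)).
  by exists M.
have Gcond_integrable :=
  bounded_integrable_prob measurable_discreteXY nu setT _ Gcond_bounded.
by rewrite EFin_Rintegral // /psi_integral /marginalX integral_pushforward //=
  ?preimage_setT.
Qed.

End conditional_distribution.

Theorem theorem5 (R : realType) (dX dY : measure_display)
  (X : measurableType dX) (Y : measurableType dY)
  (hX : forall A : set X, measurable A) (hY : forall B : set Y, measurable B)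
  (cX : countable [set: X]) (cY : countable [set: Y])
  (mu_ : nat -> probability (X * Y)%type R) (mu : probability (X * Y)%type R) :
  weak_cvg_discrete mu_ mu -> info_cvg hX mu_ mu.
Proof.
move=> mu_cvg G [M G_bounded] G_cont.
have psiE := psi_integralE hX hY cX cY _ _ _ G_bounded.
rewrite psiE; under eq_fun do rewrite psiE.
apply: cvg_EFin; first exact: nearW.
have mXY := measurable_discreteXY hX hY cX cY.
apply: (weak_cvg_Rintegral_of_ae_cvg mXY _ _ mu_cvg _ _ M) => [n z|z|];
  [exact: G_bounded|exact: G_bounded|].
apply: negligibleS _ (negligible_null_slabs hX hY cX cY mu) => z /= G_not_cvg.
apply: contra_notP G_not_cvg => /eqP mu0.
exact: cond_weak_continuous_cvg.
Qed.
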